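(* For $i,j\in I_n$ with $i\ne j$ consider the inequality $$(\ast)_{ij}:\qquad \max\left\{0,\ \frac{a_{ij}}{a_{jj}}\bigl(1-\alpha_jU^{I_n\setminus\{i,j\}}\bigr)\right\}<1-\alpha_iU^{I_n\setminus\{i,j\}}.$$ (i) For any $J\subset I_n$ with $|J|>1$, if condition $(C_i)$ holds for all $i\in J$, then $(\ast)_{ij}$ holds for all $i,j\in J$ with $i\ne j$. (ii) For a fixed $i\in I_n$, if $(\ast)_{ij}$ holds for all $j\in I_n\setminus\{i\}$, then condition $(C_i)$ holds. (iii) Condition $(C_i)$ holds for all $i\in I_n$ if and only if $(\ast)_{ij}$ holds for all $i,j\in I_n$ with $i\ne j$.
   Context: Fix $n\ge 2$ and $I_m=\{1,\dots,m\}$. Consider the Lotka–Volterra system $x_i'=b_ix_i(1-\alpha_ix)$, $i\in I_n$, where $b_i>0$, $\alpha_i=(a_{i1},\dots,a_{in})$ with $a_{ii}>0$ and $a_{ij}\ge 0$, on $\mathbb{R}^n_+$. For $u\le v$ (componentwise), $[u,v]=\{x\in\mathbb{R}^n_+:u\le x\le v\}$. For $J\subset I_n$, $u^J_i=u_i$ for $i\in J$ and $0$ otherwise. $\gamma_i=\{x\in\mathbb{R}^n_+:\alpha_ix=1\}$. Define $U$ componentwise by: $U_i=a_{ii}^{-1}$ if $a_{ii}\le a_{ji}$ or $a_{ij}=0$ for some $j\ne i$; otherwise $U_i=0$ if $a_{ji}<a_{ii}$ and $a_{jk}\le a_{ik}$ for all $j,k\in I_n\setminus\{i\}$; otherwise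 $U_i=\max\{\frac{a_{kj}-a_{ij}}{a_{ii}a_{kj}-a_{ij}a_{ki}}: j,k\in I_n\setminus\{i\},\ a_{kj}>a_{ij}\}$. Condition $(C_k)$: either $\alpha_kU^{I_n\setminus\{k\}}<1$, or every $x\in\gamma_k\cap[0,U^{I_n\setminus\{k\}}]$ satisfies $\alpha_jx>1$ for all $j\in I_n\setminus\{k\}$. *)

(* the statement is purely order-theoretic/algebraic, so it is
   stated for an arbitrary real field R (includes the real numbers). *)
From HB Require Import structures.
From mathcomp Require Import all_boot all_order all_algebra.
Set Implicit Arguments. Unset Strict Implicit. Unset Printing Implicit Defensive.
Import Order.TTheory GRing.Theory Num.Theory.
Local Open Scope ring_scope.

Section LV.
Variables (R : realFieldType) (n : nat) (A : 'M[R]_n).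

Definition alpha (i : 'I_n) (x : 'I_n -> R) : R := \sum_(j < n) A i j * x j.

Definition restr (J : {set 'I_n}) (u : 'I_n -> R) : 'I_n -> R :=
  fun i => if i \in J then u i else 0.

Definition Ucomp (i : 'I_n) : R :=
  if [exists j, (j != i) && ((A i i <= A j i) || (A i j == 0))] then (A i i)^-1
  else if [forall j, forall k, ((j != i) && (k != i)) ==> (A j k <= A i k)]
       then 0
  else \big[Num.max/0]_(j | j != i)
         \big[Num.max/0]_(k | (k != i) && (A i j < A k j))
            ((A k j - A i j) / (A i i * A k j - A i j * A k i)).

Definition U : 'I_n -> R := Ucomp.

Definition condC (k : 'I_n) : Prop :=
  alpha k (restr (~: [set k]) U) < 1 \/
  (forall x : 'I_n -> R,
     (forall l, 0 <= x l) -> alpha k x = 1 ->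
     (forall l, x l <= restr (~: [set k]) U l) ->
     forall j, j != k -> 1 < alpha j x).

Definition star (i j : 'I_n) : Prop :=
  Num.max 0 (A i j / A j j * (1 - alpha j (restr (~: [set i; j]) U)))
    < 1 - alpha i (restr (~: [set i; j]) U).

End LV.

From Pilot Require Import Defs.
From HB Require Import structures.
From mathcomp Require Import all_boot all_order all_algebra ring lra.
Import Order.TTheory GRing.Theory Num.Theory.
Local Open Scope ring_scope.

(* Condition (C_k) is only ever used through [condC_elim]: whichever of its two
   alternatives holds, a point 0 <= x <= U^{I_n \ {k}} of gamma_k satisfies
   alpha_j x > 1 for all j <> k.  The test point [crit i j] is W i j with its
   j-th coordinate raised until the point reaches gamma_i.

   The engine of both directions is a weighted identity: for x on gamma_i,
   sum_l g_l x_l = (alpha_j x - 1)(1 - a_ij U_j) + U_j (a_jj - a_ij)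
   ([gfun_sum]), whose weights g_l are nonnegative off l = j as soon as U_j is
   not given by the first case of its definition ([gfun_ge0]); [gfun_key]
   packages the resulting inequality.
   - (i) [star_of_condC]: (C_i) and (C_j) make the right side of (star)_ij
     positive ([residual_pos]); if (star)_ij failed, [residual_le_U] puts
     crit i j below U^{I_n \ {i}}, and [condC_elim] contradicts (C_i).
   - (ii) [condC_of_star]: a point x as in (C_i) is compared
     ([alpha_le_by_ratio]) with crit i k, where k maximizes a_jk / a_ik, and
     alpha_j (crit i k) > 1 ([crit_self_gt1], [crit_other_gt1]).
   - (iii) combines (i) for J = I_n with (ii). *)

Section LotkaVolterraConditions.
Set Implicit Arguments.
Unset Strict Implicit.
Variables (R : realFieldType) (n : nat) (A : 'M[R]_n).
Hypothesis hdiag : forall i, 0 < A i i.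
Hypothesis hnn : forall i j, 0 <= A i j.

Local Notation alpha := (alpha A).
Local Notation U := (U A).
Local Notation W i j := (restr (~: [set i; j]) U).

Definition upd (w : 'I_n -> R) (j : 'I_n) (s : R) : 'I_n -> R :=
  fun l => if l == j then s else w l.

Lemma alpha_upd k w j s :
  alpha k (upd w j s) = alpha k w + A k j * (s - w j).
Proof.
rewrite /Defs.alpha (bigD1 j) //= /upd eqxx [in RHS](bigD1 j) //=.
rewrite (eq_bigr (fun l => A k l * w l)); last by move=> l /negbTE ->.
ring.
Qed.

Lemma alpha_le k x y : (forall l, x l <= y l) -> alpha k x <= alpha k y.
Proof. by move=> hxy; apply: ler_sum => l _; apply: ler_wpM2l. Qed.

Lemma alpha_ge0 k x : (forall l, 0 <= x l) -> 0 <= alpha k x.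
Proof. by move=> hx; apply: sumr_ge0 => l _; apply: mulr_ge0. Qed.

Lemma alpha_scale k c x : alpha k (fun l => c * x l) = c * alpha k x.
Proof.
by rewrite /Defs.alpha mulr_sumr; apply: eq_bigr => l _; rewrite mulrCA.
Qed.

Lemma sum_ge2 (T : finType) (F : T -> R) j k :
  (forall l, 0 <= F l) -> j != k -> F j + F k <= \sum_l F l.
Proof.
move=> hF hjk; rewrite (bigD1 j) //= lerD2l (bigD1 k) 1?eq_sym //= lerDl.
exact: sumr_ge0.
Qed.

Lemma U_ge0 j : 0 <= U j.
Proof.
rewrite /Defs.U /Ucomp; case: ifP => _; first by rewrite invr_ge0 ltW.
by case: ifP => _ //; apply: bigmax_ge_id.
Qed.

Lemma restr_ge0 S l : 0 <= restr S U l.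
Proof. by rewrite /restr; case: ifP => // _; apply: U_ge0. Qed.

Lemma W_left0 i j : W i j i = 0.
Proof. by rewrite /restr !inE eqxx. Qed.

Lemma W_right0 i j : W i j j = 0.
Proof. by rewrite /restr !inE eqxx orbT. Qed.

Lemma alpha_updW k i j s :
  alpha k (upd (W i j) j s) = alpha k (W i j) + A k j * s.
Proof. by rewrite alpha_upd W_right0 subr0. Qed.

Lemma W_le_restr1 i j m l :
  (m == i) || (m == j) -> W i j l <= restr (~: [set m]) U l.
Proof.
move=> hm; rewrite /restr; case: ifP => [hl|_]; last exact: restr_ge0.
suff -> : l \in ~: [set m] by [].
by apply: subsetP hl; rewrite setCS sub1set !inE.
Qed.

Lemma restr1_upd i j l :
  j != i -> restr (~: [set i]) U l = upd (W i j) j (U j) l.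
Proof.
move=> hji; rewrite /upd /restr !inE.
by case: (eqVneq l j) => [->|_]; rewrite ?hji ?orbF.
Qed.

Lemma le_upd_of_le_restr1 i k x :
  (forall l, x l <= restr (~: [set i]) U l) -> k != i ->
  forall l, x l <= upd (W i k) k (x k) l.
Proof.
move=> xU hk l; rewrite /upd; case: (eqVneq l k) => [->//|hlk].
by have := xU l; rewrite (restr1_upd l hk) /upd (negbTE hlk).
Qed.

(* (C_k) always yields its second alternative: the first one would put
   alpha_k x <= alpha_k U^{I_n \ {k}} < 1 *)
Lemma condC_elim k x : condC A k -> (forall l, 0 <= x l) -> alpha k x = 1 ->
  (forall l, x l <= restr (~: [set k]) U l) ->
  forall j, j != k -> 1 < alpha j x.
Proof.
move=> [hlt|hface] x0 hx1 xU; last exact: hface.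
by have := le_lt_trans (alpha_le k xU) hlt; rewrite hx1 ltxx.
Qed.

(* scaled version: a point of the box on or above gamma_k has a strictly
   larger alpha_m for every m <> k (rescale it onto gamma_k) *)
Lemma condC_dominates k w : condC A k -> (forall l, 0 <= w l) ->
  (forall l, w l <= restr (~: [set k]) U l) -> 1 <= alpha k w ->
  forall m, m != k -> alpha k w < alpha m w.
Proof.
move=> Ck w0 wU hw1 m hm.
have hpos : 0 < alpha k w := lt_le_trans ltr01 hw1.
set c := (alpha k w)^-1.
have c_gt0 : 0 < c by rewrite invr_gt0.
have c_le1 : c <= 1 by rewrite invf_le1.
have : 1 < alpha m (fun l => c * w l).
  apply: condC_elim Ck _ _ _ m hm.
  - by move=> l; rewrite mulr_ge0 // ltW.
  - by rewrite alpha_scale mulVf // gt_eqF.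
  - by move=> l; apply: le_trans (wU l); rewrite ler_piMl.
by rewrite alpha_scale mulrC ltr_pdivlMr // mul1r.
Qed.

(* under (C_i) and (C_j) the point W i j lies strictly below gamma_i: otherwise
   [condC_dominates] would give both alpha_i W < alpha_j W and the converse *)
Lemma residual_pos i j : i != j -> condC A i -> condC A j ->
  0 < 1 - alpha i (W i j).
Proof.
move=> hij Ci Cj; rewrite subr_gt0 ltNge; apply/negP => hi1.
have W0 l : 0 <= W i j l by exact: restr_ge0.
have WUi l : W i j l <= restr (~: [set i]) U l.
  by apply: W_le_restr1; rewrite eqxx.
have WUj l : W i j l <= restr (~: [set j]) U l.
  by apply: W_le_restr1; rewrite eqxx orbT.
have hji : j != i by rewrite eq_sym.
have hij_lt := condC_dominates Ci W0 WUi hi1 hji.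
have := condC_dominates Cj W0 WUj (le_trans hi1 (ltW hij_lt)) hij.
by rewrite ltNge (ltW hij_lt).
Qed.

Definition caseA j :=
  [exists k, (k != j) && ((A j j <= A k j) || (A j k == 0))].

Lemma U_caseA j : caseA j -> U j = (A j j)^-1.
Proof. by rewrite /caseA => hA; rewrite /Defs.U /Ucomp hA. Qed.

Lemma lt_diag_of_not_caseA j k : ~~ caseA j -> k != j -> A k j < A j j.
Proof.
by move=> /existsPn/(_ k) + hk; rewrite hk negb_or -ltNge => /andP[].
Qed.

(* the quantities maximized in the third case of the definition of U_j *)
Definition ratio j k l := (A k l - A j l) / (A j j * A k l - A j l * A k j).

(* outside the first case, U_j bounds every admissible ratio: in the second
   case there is none, in the third U_j is their maximum *)
Lemma U_ratio_bound j k l : ~~ caseA j -> k != j -> l != j -> A j l < A k l ->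
  ratio j k l <= U j.
Proof.
rewrite /caseA => /negbTE hA hk hl hlt; rewrite /Defs.U /Ucomp hA.
case: ifP => [/forallP/(_ k)/forallP/(_ l)|_].
  by rewrite hk hl /= leNgt hlt.
set F := fun l0 =>
  \big[Num.max/0]_(k0 | (k0 != j) && (A j l0 < A k0 l0)) ratio j k0 l0.
apply: le_trans (le_bigmax_cond 0 F hl).
by apply: (le_bigmax_cond _ (ratio j ^~ l)); rewrite hk hlt.
Qed.

Definition gfun i j l := A j l - A i l + U j * (A j j * A i l - A i j * A j l).

Lemma gfun_jj i j : gfun i j j = A j j - A i j.
Proof. by rewrite /gfun [A j j * _]mulrC subrr mulr0 addr0. Qed.

Lemma gfun_sum i j w : alpha i w = 1 ->
  \sum_l gfun i j l * w l =
  (alpha j w - 1) * (1 - A i j * U j) + U j * (A j j - A i j).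
Proof.
move=> hw; have -> : \sum_l gfun i j l * w l =
    alpha j w - alpha i w + U j * (A j j * alpha i w - A i j * alpha j w).
  rewrite /Defs.alpha !mulr_sumr -!sumrB mulr_sumr -big_split /=.
  by apply: eq_bigr => l _; rewrite /gfun; ring.
by rewrite hw; ring.
Qed.

Lemma gfun_lower i j l : A i j <= A j j -> A i l <= A j l ->
  (A j l - A i l) * (1 - A i j * U j) <= gfun i j l.
Proof.
move=> hij hl.
have -> : (A j l - A i l) * (1 - A i j * U j) =
  A j l - A i l + U j * (A i j * A i l - A i j * A j l) by ring.
by rewrite /gfun lerD2l ler_wpM2l ?U_ge0 // lerB // ler_wpM2r.
Qed.

(* off the first case, g_l >= 0 for l <> j: by [gfun_lower] when a_il <= a_jl,
   and by [U_ratio_bound] (with k := i) when a_il > a_jl *)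
Lemma gfun_ge0 i j l : ~~ caseA j -> i != j -> 0 <= 1 - A i j * U j ->
  l != j -> 0 <= gfun i j l.
Proof.
move=> hA hij hZ hl; have hij_lt := lt_diag_of_not_caseA hA hij.
have [hle|hgt] := leP (A i l) (A j l).
  apply: le_trans (gfun_lower (ltW hij_lt) hle).
  by rewrite mulr_ge0 // subr_ge0.
have hden : 0 < A j j * A i l - A j l * A i j.
  rewrite subr_gt0; apply: le_lt_trans (_ : A i j * A i l < _).
    by rewrite mulrC; apply: ler_wpM2l => //; exact: ltW.
  by rewrite ltr_pM2r // (le_lt_trans (hnn j l) hgt).
have := U_ratio_bound hA hij hl hgt.
by rewrite /ratio ler_pdivrMr // /gfun => hT; lra.
Qed.

(* key inequality: for w >= 0 on gamma_i, keep the terms l = j and l = k of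
   the nonnegative sum in [gfun_sum] *)
Lemma gfun_key i j k w : ~~ caseA j -> i != j -> 0 <= 1 - A i j * U j ->
  (forall l, 0 <= w l) -> alpha i w = 1 -> k != j ->
  gfun i j k * w k <=
  (alpha j w - 1) * (1 - A i j * U j) + (A j j - A i j) * (U j - w j).
Proof.
move=> hA hij hZ w0 hw hk.
have gw0 l : 0 <= gfun i j l * w l.
  rewrite mulr_ge0 //; case: (eqVneq l j) => [->|hl]; last exact: gfun_ge0.
  by rewrite gfun_jj subr_ge0 ltW // lt_diag_of_not_caseA.
have hjk : j != k by rewrite eq_sym.
by have := sum_ge2 gw0 hjk; rewrite gfun_sum // gfun_jj => h; lra.
Qed.

Definition crit i j : 'I_n -> R :=
  upd (W i j) j ((1 - alpha i (W i j)) / A i j).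

Lemma crit_ge0 i j : 0 < A i j -> 0 <= 1 - alpha i (W i j) ->
  forall l, 0 <= crit i j l.
Proof.
move=> haij hD l; rewrite /crit /upd; case: ifP => _; last exact: restr_ge0.
by rewrite divr_ge0 // ltW.
Qed.

Lemma alpha_crit_self i j : 0 < A i j -> alpha i (crit i j) = 1.
Proof.
by move=> haij; rewrite alpha_updW mulrC divfK ?gt_eqF // addrC subrK.
Qed.

Lemma alpha_crit_other i j : 0 < A i j ->
  alpha j (crit i j) = alpha j (W i j) + A j j * (1 - alpha i (W i j)) / A i j.
Proof. by move=> haij; rewrite alpha_updW mulrA. Qed.

Lemma crit_j i j : crit i j j = (1 - alpha i (W i j)) / A i j.
Proof. by rewrite /crit /upd eqxx. Qed.

Lemma crit_i i j : i != j -> crit i j i = 0.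
Proof. by move=> hij; rewrite /crit /upd (negbTE hij) W_left0. Qed.

(* if (star)_ij fails, then crit i j stays below U^{I_n \ {i}}: in the first
   case of U_j directly, otherwise since crit i j lies on gamma_i but not above
   gamma_j, [gfun_key] (with k := i) forbids its j-th coordinate to exceed U_j *)
Lemma residual_le_U i j : i != j -> 0 < A i j -> 0 < 1 - alpha i (W i j) ->
  A j j * (1 - alpha i (W i j)) <= A i j * (1 - alpha j (W i j)) ->
  (1 - alpha i (W i j)) / A i j <= U j.
Proof.
move=> hij haij hD hDE.
have W0 l : 0 <= W i j l by exact: restr_ge0.
have hE1 : 1 - alpha j (W i j) <= 1 by rewrite lerBlDr lerDl alpha_ge0.
have [hA|hA] := boolP (caseA j).
  rewrite U_caseA // ler_pdivrMr // mulrC ler_pdivlMr // mulrC.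
  by apply: le_trans hDE _; rewrite ler_piMr // ltW.
have hjj := lt_diag_of_not_caseA hA hij.
have hxj : alpha j (crit i j) <= 1.
  by rewrite alpha_crit_other // -lerBrDl ler_pdivrMr // [_ * A i j]mulrC.
rewrite -crit_j leNgt; apply/negP => hlt.
have hZ : 0 <= 1 - A i j * U j.
  apply: le_trans (_ : 1 - A i j * crit i j j <= _).
    by rewrite crit_j mulrC divfK ?gt_eqF // opprB addrC subrK alpha_ge0.
  by rewrite lerB // ler_wpM2l // ltW.
have := gfun_key hA hij hZ (crit_ge0 haij (ltW hD)) (alpha_crit_self haij) hij.
by rewrite crit_i // mulr0; nra.
Qed.

Lemma star_of_condC i j : i != j -> condC A i -> condC A j -> star A i j.
Proof.
move=> hij Ci Cj; have hji : j != i by rewrite eq_sym.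
have hD := residual_pos hij Ci Cj.
rewrite /star gt_max hD /= ltNge; apply/negP => hc.
have haij : 0 < A i j.
  rewrite lt_def hnn andbT; apply/eqP => e.
  by move: hc; rewrite e !mul0r leNgt hD.
have hDE : A j j * (1 - alpha i (W i j)) <= A i j * (1 - alpha j (W i j)).
  by move: hc; rewrite mulrAC ler_pdivlMr // mulrC.
have hsU := residual_le_U hij haij hD hDE.
suff : 1 < alpha j (crit i j).
  rewrite alpha_crit_other // ltNge -lerBrDl ler_pdivrMr //.
  by rewrite [_ * A i j]mulrC hDE.
have crit_le l : crit i j l <= restr (~: [set i]) U l.
  rewrite (restr1_upd l hji) /crit /upd.
  by case: ifP => _; [exact: hsU | exact: lexx].
exact: condC_elim Ci (crit_ge0 haij (ltW hD)) (alpha_crit_self haij) crit_le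
  j hji.
Qed.

Lemma alpha_le_by_ratio i j r x v : alpha i x = alpha i v ->
  (forall l, 0 <= (A j l - r * A i l) * (x l - v l)) ->
  alpha j v <= alpha j x.
Proof.
move=> hxv hl; rewrite -subr_ge0.
have -> : alpha j x - alpha j v =
    \sum_l (A j l - r * A i l) * (x l - v l) + r * (alpha i x - alpha i v).
  rewrite /Defs.alpha -!sumrB mulr_sumr -big_split /=.
  by apply: eq_bigr => l _; ring.
by rewrite hxv subrr mulr0 addr0 sumr_ge0.
Qed.

(* (star)_ij says exactly that crit i j lies strictly above gamma_j *)
Lemma crit_self_gt1 i j : 0 < A i j -> star A i j -> 1 < alpha j (crit i j).
Proof.
move=> haij; rewrite /star gt_max => /andP[_ h].
have : 1 - alpha j (W i j) < A j j * (1 - alpha i (W i j)) / A i j.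
  move: h; rewrite ltr_pdivlMr // mulrAC ltr_pdivrMr ?hdiag //.
  by rewrite mulrC [_ * A j j]mulrC.
by rewrite alpha_crit_other //; lra.
Qed.

(* crit i k lies strictly above gamma_j when a_jk / a_ik >= a_jj / a_ij:
   in the first case of U_j the two coordinates j and k already suffice,
   otherwise [gfun_key] applies with the weight g_k > 0 *)
Lemma crit_other_gt1 i j k : i != j -> k != j ->
  0 < A i k -> 0 < A i j -> 0 < 1 - alpha i (W i k) ->
  A j j / A i j <= A j k / A i k -> 1 < alpha j (crit i k).
Proof.
move=> hij hkj haik haij hD hratio.
set s := (1 - alpha i (W i k)) / A i k.
have hs : 0 < s by rewrite divr_gt0.
have v0 := crit_ge0 haik (ltW hD).
have hji : j != i by rewrite eq_sym.
have hjk : j != k by rewrite eq_sym.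
have vj : crit i k j = U j.
  by rewrite /crit /upd (negbTE hjk) /restr !inE (negbTE hji) (negbTE hjk).
have vk : crit i k k = s by rewrite crit_j.
have has : A i k * s = 1 - alpha i (W i k) by rewrite /s mulrC divfK ?gt_eqF.
have hvi := alpha_crit_self haik.
have hajk : 0 < A j k.
  have : 0 < A j k / A i k by apply: lt_le_trans hratio; rewrite divr_gt0.
  by rewrite pmulr_lgt0 // invr_gt0.
have F0 m l : 0 <= A m l * crit i k l by rewrite mulr_ge0.
have [hA|hA] := boolP (caseA j).
  apply: lt_le_trans (sum_ge2 (F0 j) hjk).
  by rewrite vj vk U_caseA // mulfV ?gt_eqF // ltrDl mulr_gt0.
have hij_lt := lt_diag_of_not_caseA hA hij.
have hZ : 0 < 1 - A i j * U j.
  by have := sum_ge2 (F0 i) hjk; rewrite vj vk has -/(alpha i _) hvi; lra.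
have aik_lt : A i k < A j k.
  have : 1 < A j k / A i k.
    by apply: lt_le_trans hratio; rewrite ltr_pdivlMr // mul1r.
  by rewrite ltr_pdivlMr // mul1r.
have gk : 0 < gfun i j k.
  apply: lt_le_trans (gfun_lower (ltW hij_lt) (ltW aik_lt)).
  by rewrite mulr_gt0 // subr_gt0.
have := gfun_key hA hij (ltW hZ) v0 hvi hkj.
rewrite vj subrr mulr0 addr0 vk => h.
have := lt_le_trans (mulr_gt0 gk hs) h.
by rewrite pmulr_lgt0 // subr_gt0.
Qed.

(* part (ii); the face of (C_i) forces a_ik > 0 for all k <> i, since
   alpha_i x <= alpha_i (W i k) + a_ik x_k and alpha_i (W i k) < 1 *)
Lemma condC_of_star i : (forall j, j != i -> star A i j) -> condC A i.
Proof.
move=> hs; right => x x0 hx1 xU j hji.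
have hij : i != j by rewrite eq_sym.
have hD k : k != i -> 0 < 1 - alpha i (W i k).
  by move=> hk; have := hs k hk; rewrite /star gt_max => /andP[].
have xi : x i = 0.
  apply/eqP; rewrite eq_le x0 andbT.
  by have := xU i; rewrite /restr !inE eqxx.
have hpos k : k != i -> 0 < A i k.
  move=> hk; rewrite lt_def hnn andbT; apply/eqP => e.
  have := alpha_le i (le_upd_of_le_restr1 xU hk).
  rewrite alpha_updW e mul0r addr0 hx1 => h.
  by have := hD k hk; rewrite subr_gt0 ltNge h.
have [k hk hmax] : exists2 k, k != i &
    forall l, l != i -> A j l / A i l <= A j k / A i k.
  case: (@arg_maxP _ R _ j (fun l => l != i) (fun l => A j l / A i l) hji).
  by move=> k hk hm; exists k.
have haik := hpos k hk.
have hvx : alpha j (crit i k) <= alpha j x.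
  apply: (alpha_le_by_ratio (i := i) (r := A j k / A i k)).
    by rewrite hx1 alpha_crit_self.
  move=> l; case: (eqVneq l k) => [->|hlk].
    by rewrite divfK ?gt_eqF // subrr mul0r.
  case: (eqVneq l i) => [->|hli].
    by rewrite xi crit_i 1?eq_sym // subrr mulr0.
  have := le_upd_of_le_restr1 xU hk l.
  rewrite /crit /upd (negbTE hlk) -subr_le0 => hd.
  apply: mulr_le0 => //; rewrite subr_le0 -ler_pdivrMr ?hpos //.
  exact: hmax.
apply: lt_le_trans hvx.
case: (eqVneq k j) => [ekj|hkj].
  by rewrite ekj in haik *; apply: crit_self_gt1 => //; apply: hs.
exact: crit_other_gt1 hij hkj haik (hpos j hji) (hD k hk) (hmax j hji).
Qed.

End LotkaVolterraConditions.

Theorem lemma3p2 (R : realFieldType) (n : nat) (A : 'M[R]_n)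
  (hn : (2 <= n)%N)
  (hdiag : forall i, 0 < A i i)
  (hnn : forall i j, 0 <= A i j) :
  (forall J : {set 'I_n}, (1 < #|J|)%N ->
     (forall i, i \in J -> condC A i) ->
     forall i j, i \in J -> j \in J -> i != j -> star A i j)
  /\ (forall i, (forall j, j != i -> star A i j) -> condC A i)
  /\ ((forall i, condC A i) <-> (forall i j, i != j -> star A i j)).
Proof.
have star_ij := star_of_condC hdiag hnn.
have cond_i := condC_of_star hdiag hnn.
split; [|split].
- by move=> J _ hC i j hi hj hij; apply: star_ij => //; apply: hC.
- exact: cond_i.
- split=> [hC i j hij | hS i]; first exact: star_ij.
  by apply: cond_i => j hji; apply: hS; rewrite eq_sym.
Qed.
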